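(* For every $r\geq 4$ there is an antipodal partial cube of rank $r$ and minimum degree $4$. Moreover, there is an antipodal partial cube of rank $4$ and minimum degree $3$.
   Context: Hypercube $Q_n$: vertex set $\{+,-\}^n$, adjacency = differing in one coordinate. A partial cube is an isometric subgraph $G$ of $Q_n$, with $n$ minimal (isometric dimension); its edges split into $\Theta$-classes $E_f$ (edges flipping coordinate $f$). $G$ is antipodal if for every vertex $v$ of $G$ the vertex of $Q_n$ with all coordinates of $v$ flipped also belongs to $G$. The contraction $\pi_f(G)$ is obtained by contracting all edges of $E_f$; the rank of $G$ is the largest $r$ such that $Q_r$ can be obtained from $G$ by a sequence of contractions. *)

From mathcomp Require Import all_boot.
Set Implicit Arguments. Unset Strict Implicit. Unset Printing Implicit Defensive.

(* Vertices of the hypercube Q_n : {+,-}^n, encoded as bool-valued functions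
   on 'I_n (true = +, false = -). *)
Definition cube (n : nat) := {ffun 'I_n -> bool}.

(* Hamming distance = graph distance in Q_n. *)
Definition hamming n (x y : cube n) : nat := #|[set i | x i != y i]|.

Definition adj n (x y : cube n) : bool := hamming x y == 1.

(* A subgraph of Q_n is given by its vertex set V, with the induced
   adjacency (an isometric subgraph of Q_n is necessarily induced). *)

Definition walk_len n (V : {set cube n}) (x y : cube n) (k : nat) : Prop :=
  exists p : seq (cube n),
    [/\ path (@adj n) x p, all (fun z => z \in V) p, last x p = y & size p = k].

Definition gdist n (V : {set cube n}) (x y : cube n) (k : nat) : Prop :=
  walk_len V x y k /\ forall j, walk_len V x y j -> k <= j.

Definition isometric n (V : {set cube n}) : Prop :=
  forall x y, x \in V -> y \in V -> gdist V x y (hamming x y).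

Definition partial_cube n (V : {set cube n}) : Prop :=
  isometric V /\
  forall m, m < n ->
    ~ exists phi : cube n -> cube m,
        forall x y k, x \in V -> y \in V -> gdist V x y k ->
          hamming (phi x) (phi y) = k.

Definition antipodal n (V : {set cube n}) : Prop :=
  forall v, v \in V -> [ffun i => ~~ v i] \in V.

Definition deg n (V : {set cube n}) (v : cube n) : nat :=
  #|[set u in V | adj v u]|.

Definition min_degree n (V : {set cube n}) (d : nat) : Prop :=
  (exists2 v, v \in V & deg V v = d) /\
  forall v, v \in V -> d <= deg V v.

(* Contraction pi_f(G) of the Theta-class E_f (edges flipping coordinate f):
   the resulting partial cube lives in Q_{n-1}, its vertices being the
   vertices of G with coordinate f deleted. *)
Definition contr n (f : 'I_n.+1) (V : {set cube n.+1}) : {set cube n} :=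
  [set ([ffun i => x (lift f i)] : cube n) | x : cube n.+1 in V].

Inductive contr_seq : forall n, {set cube n} -> forall m, {set cube m} -> Prop :=
| cs_refl n (V : {set cube n}) : contr_seq V V
| cs_step n (V : {set cube n.+1}) (f : 'I_n.+1) m (W : {set cube m}) :
    contr_seq (contr f V) W -> contr_seq V W.

Definition iso_cube m (W : {set cube m}) (r : nat) : Prop :=
  exists g : cube r -> cube m,
    [/\ injective g, forall z, g z \in W, forall w, w \in W -> exists z, g z = w
      & forall z1 z2, adj (g z1) (g z2) = adj z1 z2].

Definition has_rank n (V : {set cube n}) (r : nat) : Prop :=
  (exists m (W : {set cube m}), contr_seq V W /\ iso_cube W r) /\
  forall m (W : {set cube m}) r', contr_seq V W -> iso_cube W r' -> r' <= r.

From mathcomp Require Import all_boot.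
From mathcomp Require Import zify.

Set Implicit Arguments. Unset Strict Implicit. Unset Printing Implicit Defensive.

(* Take Q_n and delete every vertex that is constant on the first u
   coordinates without being constant.  The two constant vertices survive,
   and their neighbours in the resulting graph are exactly their flips in one
   of the first u coordinates.  Every other vertex x loses at most one
   neighbour when u >= 3: a lost neighbour flips some i < u and is constant
   below u, which pins down i.  Hence from any vertex a coordinate on which
   it differs from a target can be flipped inside the graph, so the graph is
   isometric, and its minimum degree is u as soon as u < n.  Contracting the
   first coordinate yields all of Q_(n-1), since a deleted vertex becomes a
   surviving one when that coordinate is flipped, while fewer than 2^n
   vertices cannot contract onto Q_n: the rank is n - 1.  The pairs
   (n, u) = (r + 1, 4) and (5, 3) give the theorem. *)

Definition flip n (x : cube n) (i : 'I_n) : cube n := [ffun j => (j == i) (+) x j].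

Lemma flipE n (x : cube n) i j : flip x i j = (j == i) (+) x j.
Proof. by rewrite ffunE. Qed.

Lemma flip_inj n (x : cube n) : injective (flip x).
Proof.
move=> i j /(congr1 (fun w : cube n => w i)); rewrite !flipE eqxx.
by case: eqP => // _; case: (x i).
Qed.

Lemma hamming_eq0 n (x y : cube n) : (hamming x y == 0) = (x == y).
Proof.
rewrite cards_eq0; apply/eqP/eqP => [xy | <-].
  apply/ffunP => i; apply/eqP/negPn.
  by have := congr1 (fun A : {set 'I_n} => i \in A) xy; rewrite !inE => ->.
by apply/setP => i; rewrite !inE eqxx.
Qed.

Lemma hamming_triangle n (x y z : cube n) : hamming x z <= hamming x y + hamming y z.
Proof.
apply: leq_trans (leq_card_setU _ _); apply: subset_leq_card; apply/subsetP => j.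
by rewrite !inE; case: (x j); case: (y j); case: (z j).
Qed.

Lemma hamming_max n (x y : cube n) : hamming x y <= n.
Proof. by rewrite -[n in _ <= n]card_ord max_card. Qed.

Lemma hamming_compl n (x : cube n) : hamming x [ffun i => ~~ x i] = n.
Proof. by rewrite -[RHS]card_ord; apply: eq_card => i; rewrite !inE ffunE; case: (x i). Qed.

Lemma hamming_flip n (x y : cube n) i :
  x i != y i -> hamming (flip x i) y = (hamming x y).-1.
Proof.
move=> xy_i; rewrite /hamming [in RHS](cardsD1 i) inE xy_i /=.
apply: eq_card => j; rewrite !inE flipE; case: (eqVneq j i) => [-> | _] //=.
by move: xy_i; case: (x i); case: (y i).
Qed.

Lemma adj_flip n (x : cube n) i : adj x (flip x i).
Proof.
rewrite /adj /hamming -(cards1 i); apply/eqP.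
by apply: eq_card => j; rewrite !inE flipE; case: (eqVneq j i) => [-> | _]; case: (x _).
Qed.

Lemma adjP n (x y : cube n) : adj x y -> exists i, y = flip x i.
Proof.
case/cards1P => i xy; exists i; apply/ffunP => j.
have := congr1 (fun A : {set 'I_n} => j \in A) xy; rewrite !inE flipE.
by case: (eqVneq j i) => [-> | _] /=; case: (x _); case: (y _).
Qed.

Lemma walk_len_hamming n (V : {set cube n}) x y k :
  walk_len V x y k -> hamming x y <= k.
Proof.
case=> p [+ _ <- <-]; elim: p x => [|z p IHp] x /=.
  by move=> _; rewrite leqn0 hamming_eq0.
case/andP=> /eqP xz zp; apply: leq_trans (hamming_triangle x z _) _.
by rewrite xz add1n ltnS IHp.
Qed.

Lemma walk_len_cons n (V : {set cube n}) x z y k :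
  adj x z -> z \in V -> walk_len V z y k -> walk_len V x y k.+1.
Proof. by move=> xz zV [p [zp pV <- <-]]; exists (z :: p); rewrite /= xz zV. Qed.

Lemma isometric_of_flip_towards n (V : {set cube n}) :
  (forall x y, x \in V -> y \in V -> x != y ->
     exists2 i, x i != y i & flip x i \in V) ->
  isometric V.
Proof.
move=> towards x y xV yV; split; last exact: walk_len_hamming.
have [d xy_d] : exists d, hamming x y = d by exists (hamming x y).
rewrite xy_d; elim: d x xV xy_d => [|d IHd] x xV xy_d.
  by move/eqP: xy_d; rewrite hamming_eq0 => /eqP ->; exists [::].
have xy : x != y by rewrite -hamming_eq0 xy_d.
have [i xy_i flipV] := towards x y xV yV xy.
apply: walk_len_cons (adj_flip x i) flipV (IHd _ flipV _).
by rewrite hamming_flip // xy_d.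
Qed.

Lemma partial_cube_of_diameter n (V : {set cube n}) x y :
  isometric V -> x \in V -> y \in V -> hamming x y = n -> partial_cube V.
Proof.
move=> isoV xV yV xy_n; split=> // m lt_mn [phi phi_dist].
have := hamming_max (phi x) (phi y).
by rewrite (phi_dist _ _ _ xV yV (isoV _ _ xV yV)) xy_n leqNgt lt_mn.
Qed.

Lemma deg_flip n (V : {set cube n}) x : deg V x = #|[set i | flip x i \in V]|.
Proof.
rewrite /deg -(card_imset _ (@flip_inj n x)).
apply: eq_card => y; rewrite inE; apply/andP/imsetP => [[yV /adjP [i yE]] | [i]].
  by exists i; rewrite // inE -yE.
by rewrite inE => iV ->; rewrite iV adj_flip.
Qed.

Lemma card_cube n : #|[set: cube n]| = 2 ^ n.
Proof. by rewrite cardsT card_ffun card_bool card_ord. Qed.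

Lemma card_contr_seq n (V : {set cube n}) m (W : {set cube m}) :
  contr_seq V W -> #|W| <= #|V|.
Proof. by elim=> // {}n {}V f {}m {}W _ /leq_trans; apply; apply: leq_imset_card. Qed.

Lemma card_iso_cube m (W : {set cube m}) r : iso_cube W r -> #|W| = 2 ^ r.
Proof.
case=> g [g_inj gW Wg _]; rewrite -card_cube -(card_imset _ g_inj).
by apply: eq_card => w; apply/idP/imsetP => [/Wg [z <-] | [z _ ->]] //; exists z.
Qed.

Lemma iso_cube_setT n : iso_cube [set: cube n] n.
Proof. by exists id; split=> // [z | w _]; [rewrite in_setT | exists w]. Qed.

Lemma contr_eq_setT n (V : {set cube n.+1}) f :
  (forall x, x \in V \/ flip x f \in V) -> contr f V = [set: cube n].
Proof.
move=> flipV; apply/setP => z; rewrite inE; apply/imsetP.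
pose x : cube n.+1 := [ffun j => if unlift f j is Some i then z i else false].
have contr_x : z = [ffun i => x (lift f i)] by apply/ffunP => i; rewrite !ffunE liftK.
case: (flipV x) => [xV | fxV]; [exists x | exists (flip x f)] => //.
by rewrite contr_x; apply/ffunP => i; rewrite !ffunE eq_sym (negbTE (neq_lift f i)).
Qed.

Lemma has_rank_of_contr n (V : {set cube n.+1}) f :
  (forall x, x \in V \/ flip x f \in V) -> V != [set: cube n.+1] -> has_rank V n.
Proof.
move=> flipV VnT; split.
  exists n, (contr f V); split; first by apply: cs_step; apply: cs_refl.
  by rewrite contr_eq_setT //; apply: iso_cube_setT.
move=> m W r /card_contr_seq WV /card_iso_cube W_r.
have : #|V| < 2 ^ n.+1 by rewrite -card_cube proper_card // properT.
by move=> /(leq_ltn_trans WV); rewrite W_r ltn_exp2l.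
Qed.

Lemma widen_ord_inj n u (le_un : u <= n) : injective (widen_ord le_un).
Proof. by move=> i j [] /val_inj. Qed.

Lemma card_below n u : u <= n -> #|[set i : 'I_n | i < u]| = u.
Proof.
move=> le_un; rewrite -[RHS]card_ord -(card_imset _ (@widen_ord_inj _ _ le_un)).
apply: eq_card => i; rewrite inE; apply/idP/imsetP => [lt_iu | [k _ ->]].
  by exists (Ordinal lt_iu) => //; apply: val_inj.
by rewrite /= ltn_ord.
Qed.

Lemma exists_below_notin n u (S : {set 'I_n}) :
  #|S| < u -> u <= n -> exists2 k : 'I_n, k < u & k \notin S.
Proof.
move=> lt_Su le_un.
have : 0 < #|[set i : 'I_n | i < u] :\: S|.
  rewrite cardsD card_below // subn_gt0; apply: leq_ltn_trans lt_Su.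
  by rewrite subset_leq_card ?subsetIr.
by case/card_gt0P => k; rewrite !inE => /andP [kS lt_ku]; exists k.
Qed.

Definition const_below n u (x : cube n) : bool :=
  [forall i : 'I_n, forall j : 'I_n, (i < u) && (j < u) ==> (x i == x j)].

Lemma const_belowP n u (x : cube n) :
  reflect (forall i j : 'I_n, i < u -> j < u -> x i = x j) (const_below u x).
Proof.
apply: (iffP forallP) => [cx i j iu ju | cx i].
  by move/forallP: (cx i) => /(_ j) /implyP; rewrite iu ju => /(_ isT) /eqP.
by apply/forallP => j; apply/implyP => /andP [iu ju]; rewrite (cx i j).
Qed.

Lemma const_belowW n u v (x : cube n) : u <= v -> const_below v x -> const_below u x.
Proof.
move=> le_uv /const_belowP cx; apply/const_belowP => i j iu ju.
by apply: cx; apply: leq_trans le_uv.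
Qed.

Lemma const_belowC n u (x : cube n) : const_below u [ffun i => ~~ x i] = const_below u x.
Proof.
by apply: eq_forallb => i; apply: eq_forallb => j; rewrite !ffunE; case: (x i); case: (x j).
Qed.

Lemma const_below_flip_ge n u (x : cube n) (i : 'I_n) :
  u <= i -> const_below u (flip x i) = const_below u x.
Proof.
move=> le_ui; have below_ne (j : 'I_n) : j < u -> (j == i) = false.
  by move=> ju; apply: contraTF ju => /eqP ->; rewrite -leqNgt.
apply: eq_forallb => j; apply: eq_forallb => k; rewrite !flipE.
by case: (ltnP j u) => ju; case: (ltnP k u) => ku //=; rewrite !below_ne.
Qed.

Lemma const_below_flip_lt n u (x : cube n) (i : 'I_n) :
  1 < u -> u <= n -> i < u -> const_below u x -> ~~ const_below u (flip x i).
Proof.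
move=> lt1u le_un iu /const_belowP cx; apply/const_belowP => cfx.
have [j ju] := @exists_below_notin n u [set i] ltac:(by rewrite cards1) le_un.
rewrite inE => ji.
by have := cfx i j iu ju; rewrite !flipE eqxx (negbTE ji) (cx j i ju iu); case: (x i).
Qed.

Lemma const_below_cst n u b : const_below u ([ffun=> b] : cube n).
Proof. by apply/const_belowP => i j _ _; rewrite !ffunE. Qed.

Definition thinned_cube n u : {set cube n} :=
  [set x | ~~ const_below u x || const_below n x].

Lemma antipodal_thinned_cube n u : antipodal (thinned_cube n u).
Proof. by move=> x; rewrite !inE !const_belowC. Qed.

Section ThinnedCube.

Variables n u : nat.
Hypothesis u_gt2 : 2 < u.
Hypothesis u_lt_n : u < n.

Local Notation V := (thinned_cube n u).

Lemma const_in_thinned_cube x : const_below n x -> x \in V.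
Proof. by rewrite inE orbC => ->. Qed.

Lemma flip_const_in x (i : 'I_n) : const_below n x -> (flip x i \in V) = (i < u).
Proof.
move=> cx; have cux : const_below u x by apply: const_belowW cx; apply: ltnW.
rewrite inE; case: (ltnP i u) => [iu | ui].
  by rewrite (const_below_flip_lt _ _ iu cux) //; lia.
rewrite const_below_flip_ge // cux /=; apply/negbTE/const_below_flip_lt => //; lia.
Qed.

Lemma flip_notin_lt x (i : 'I_n) : ~~ const_below u x -> flip x i \notin V -> i < u.
Proof.
move=> ncx; rewrite inE negb_or negbK => /andP [cfx _].
by rewrite ltnNge; apply: contra ncx => ui; rewrite -(const_below_flip_ge x ui).
Qed.

Lemma notin_thinned_cube x : (x \notin V) = const_below u x && ~~ const_below n x.
Proof. by rewrite inE negb_or negbK. Qed.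

Lemma thinned_cube_nonconst x : x \in V -> ~~ const_below n x -> ~~ const_below u x.
Proof. by rewrite inE => /orP [] // ->. Qed.

(* A third coordinate k < u would equal both ~~ x i and x i. *)
Lemma flip_notin_uniq x i j :
  ~~ const_below u x -> flip x i \notin V -> flip x j \notin V -> i = j.
Proof.
move=> ncx fi fj; have [iu ju] := (flip_notin_lt ncx fi, flip_notin_lt ncx fj).
apply/eqP; apply: contraT => ij.
have card_ij : #|[set i; j]| < u by rewrite cards2 ij.
have [k ku] := exists_below_notin card_ij (ltnW u_lt_n).
rewrite !inE negb_or => /andP [ki kj].
move: fi fj; rewrite !notin_thinned_cube => /andP [/const_belowP ci _] /andP [/const_belowP cj _].
have := ci i k iu ku; have := cj i k iu ku.
by rewrite !flipE eqxx (negbTE ij) (negbTE ki) (negbTE kj) /= => <-; case: (x i).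
Qed.

Lemma card_flip_notin x : ~~ const_below u x -> #|~: [set i | flip x i \in V]| <= 1.
Proof.
move=> ncx; apply/card_le1_eqP => i j; rewrite !in_setC ![i \in _]inE ![j \in _]inE.
by move=> fi fj; rewrite (flip_notin_uniq ncx fi fj).
Qed.

Lemma const_towards x y : const_below n x -> y \in V -> x != y ->
  exists2 i, x i != y i & flip x i \in V.
Proof.
move=> cx yV xy.
case: (pickP (fun i => (x i != y i) && (i < u))) => [i /andP [xy_i iu] | agree].
  by exists i; rewrite // flip_const_in.
have y_u (i : 'I_n) : i < u -> y i = x i.
  by move=> iu; move: (agree i); rewrite iu andbT => /negbT /negPn /eqP.
move/const_belowP: cx => cx; have cuy : const_below u y.
  by apply/const_belowP => i j iu ju; rewrite !y_u // (cx i j).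
move: yV; rewrite inE cuy => /const_belowP cy.
have [k ku _] := @exists_below_notin n u set0 ltac:(by rewrite cards0; lia) (ltnW u_lt_n).
by case/eqP: xy; apply/ffunP => j; rewrite (cx j k) // (cy j k) // y_u.
Qed.

Lemma nonconst_towards x y : ~~ const_below u x -> y \in V -> x != y ->
  exists2 i, x i != y i & flip x i \in V.
Proof.
move=> ncx yV xy.
case: (pickP (fun i => (x i != y i) && (flip x i \in V))) => [i /andP [] | none].
  by exists i.
have : hamming x y <= 1.
  rewrite /hamming; apply: leq_trans (card_flip_notin ncx).
  apply: subset_leq_card; apply/subsetP => i.
  by rewrite in_setC ![i \in _]inE => xy_i; move: (none i); rewrite xy_i => /negbT.
rewrite leq_eqVlt ltnS leqn0 hamming_eq0 (negbTE xy) orbF => /adjP [i yE].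
by move: (none i); rewrite -yE yV yE flipE eqxx; case: (x i).
Qed.

Lemma thinned_cube_towards x y : x \in V -> y \in V -> x != y ->
  exists2 i, x i != y i & flip x i \in V.
Proof.
move=> xV; case: (boolP (const_below n x)) => [/const_towards | ncx]; first exact.
exact: nonconst_towards (thinned_cube_nonconst xV ncx).
Qed.

Lemma isometric_thinned_cube : isometric V.
Proof. exact: isometric_of_flip_towards thinned_cube_towards. Qed.

Lemma partial_cube_thinned_cube : partial_cube V.
Proof.
have cV := const_in_thinned_cube (const_below_cst n n false).
exact: partial_cube_of_diameter isometric_thinned_cube cV (antipodal_thinned_cube cV)
                                (hamming_compl _).
Qed.

Lemma deg_thinned_cube_const x : const_below n x -> deg V x = u.
Proof.
move=> cx; rewrite deg_flip -[RHS](card_below (ltnW u_lt_n)).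
by apply: eq_card => i; rewrite ![i \in _]inE flip_const_in.
Qed.

Lemma min_degree_thinned_cube : min_degree V u.
Proof.
have cx := const_below_cst n n false; split.
  by exists [ffun=> false]; [exact: const_in_thinned_cube cx | exact: deg_thinned_cube_const cx].
move=> x xV; case: (boolP (const_below n x)) => [/deg_thinned_cube_const -> // | ncx].
have := cardsC [set i | flip x i \in V]; have := card_flip_notin (thinned_cube_nonconst xV ncx).
by rewrite deg_flip card_ord; lia.
Qed.

Lemma thinned_cube_proper : V != [set: cube n].
Proof.
apply/eqP => VT; have := flip_const_in (Ordinal u_lt_n) (const_below_cst n n false).
by rewrite VT in_setT ltnn.
Qed.

Lemma flip_notin_in x (i : 'I_n) : i < u -> x \notin V -> flip x i \in V.
Proof.
rewrite notin_thinned_cube => iu /andP [cux _].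
by rewrite inE (const_below_flip_lt _ _ iu cux) //; lia.
Qed.

End ThinnedCube.

Lemma has_rank_thinned_cube m u : 2 < u -> u <= m -> has_rank (thinned_cube m.+1 u) m.
Proof.
move=> u_gt2 le_um; apply: (@has_rank_of_contr _ _ ord0); last exact: thinned_cube_proper.
move=> x; case: (boolP (x \in thinned_cube m.+1 u)) => [| xV]; [left | right] => //.
by apply: flip_notin_in => //; apply: ltn_trans u_gt2.
Qed.

Theorem mainTheorem16 :
  (forall r : nat, 4 <= r ->
     exists n (V : {set cube n}),
       [/\ partial_cube V, antipodal V, has_rank V r & min_degree V 4]) /\
  (exists n (V : {set cube n}),
       [/\ partial_cube V, antipodal V, has_rank V 4 & min_degree V 3]).
Proof.
split=> [r r_ge4 | ].
  exists r.+1, (thinned_cube r.+1 4); split.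
  - exact: partial_cube_thinned_cube.
  - exact: antipodal_thinned_cube.
  - exact: has_rank_thinned_cube.
  - exact: min_degree_thinned_cube.
exists 5, (thinned_cube 5 3); split.
- exact: partial_cube_thinned_cube.
- exact: antipodal_thinned_cube.
- exact: has_rank_thinned_cube.
- exact: min_degree_thinned_cube.
Qed.
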